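(* Let $F$, $G$ and $\Pi$ be as in the context. If $S\subset\Sigma_A\times I$ is an attracting (resp. repelling) strip with respect to $G$ and $B$ is its maximal attractor (resp. maximal repeller), then $\Pi(B)$ is the maximal attractor (resp. maximal repeller) of the bi-strip $\Pi(S)$, which is attracting (resp. repelling) with respect to $F$.
   Context: $I=[0,1]$, $R(x)=1-x$. $F(\xi,p)=(\sigma(\xi),f_{\xi_0}(p))$ on $\Sigma_N\times I$, $\Sigma_N=\{1,\ldots,N\}^{\mathbb Z}$, with $f_i$ $C^1$-diffeomorphisms onto their images. $\mathcal I_P$ / $\mathcal I_R$: indices of orientation preserving / reversing $f_i$. $A=(a_{ij})_{i,j=1}^{2N}$ with $a_{ij}=1$ if ($i\in\mathcal I_P$, $j\le N$), or ($i\in\mathcal I_R$, $j>N$), or ($i-N\in\mathcal I_P$, $j>N$), or ($i-N\in\mathcal I_R$, $j\le N$), else $0$; $\Sigma_A$ the $A$-admissible sequences in $\{1,\ldots,2N\}^{\mathbb Z}$ with shift $\sigma_A$; $\pi(\omega)_n=\overline{\omega_n}$ ($\overline i=i$ for $i\le N$, $\overline i=i-N$ otherwise). $G(\omega,x)=(\sigma_A(\omega),g_{\omega_0}(x))$ with $g_i=f_i$, $g_{i+N}=R\circ f_i\circ R$ ($i\in\mathcal I_P$), $g_i=R\circ f_i$, $g_{i+N}=f_i\circ R$ ($i\in\mathcal I_R$). $C=\{\omega\colon\omega_0\le N\}$; $\Pi(\omega,x)=(\pi(\omega),x)$ if $\omega\in C$, $(\pi(\omega),R(x))$ otherwise. Strips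 $S_{\varphi,\psi}=\{(\omega,x)\colon\varphi(\omega)\le x\le\psi(\omega)\}$ for $\varphi<\psi$ pointwise; bi-strip = union of two strips. For a step skew-product $H$, a (bi-)strip $S$ is attracting if $H(S)\subset\operatorname{int}S$, repelling if $H^{-1}$ is defined on $S$ and $H^{-1}(S)\subset\operatorname{int}S$. The maximal attractor of an attracting $S$ is $\bigcap_{n\ge0}H^n(S)$; the maximal repeller of a repelling $S$ is $\bigcap_{n\ge0}H^{-n}(S)$ (maximal attractor for $H^{-1}$). *)

From Stdlib Require Import Reals ZArith Lra Lia ClassicalEpsilon.
Open Scope R_scope.

Definition inI (x : R) : Prop := 0 <= x <= 1.
Definition refl (x : R) : R := 1 - x.

Definition deriv_within (D : R -> Prop) (g : R -> R) (x d : R) : Prop :=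
  forall eps, 0 < eps -> exists delta, 0 < delta /\
    forall y, D y -> y <> x -> Rabs (y - x) < delta ->
      Rabs ((g y - g x) / (y - x) - d) < eps.

Definition cont_within (D : R -> Prop) (h : R -> R) : Prop :=
  forall x, D x -> forall eps, 0 < eps -> exists delta, 0 < delta /\
    forall y, D y -> Rabs (y - x) < delta -> Rabs (h y - h x) < eps.

Definition C1_on (D : R -> Prop) (g : R -> R) : Prop :=
  exists d : R -> R, (forall x, D x -> deriv_within D g x (d x)) /\ cont_within D d.

Definition imageI (g : R -> R) : R -> Prop := fun y => exists x, inI x /\ g x = y.

Definition C1_diffeo_onto_image (g : R -> R) : Prop :=
  C1_on inI g /\
  (forall x y, inI x -> inI y -> g x = g y -> x = y) /\
  exists h : R -> R, (forall x, inI x -> h (g x) = x) /\ C1_on (imageI g) h.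

Definition orient_pres (g : R -> R) : Prop :=
  forall x y, inI x -> inI y -> x < y -> g x < g y.
Definition orient_rev (g : R -> R) : Prop :=
  forall x y, inI x -> inI y -> x < y -> g y < g x.

Definition seqZ := Z -> nat.
Definition shift (w : seqZ) : seqZ := fun n => w (n + 1)%Z.

Definition SigmaN (N : nat) (xi : seqZ) : Prop := forall n, ((1 <= xi n)%nat /\ (xi n <= N)%nat).

(* entries a_ij = 1 of the 2N x 2N matrix A (indices 1..2N) *)
Definition amat (N : nat) (f : nat -> R -> R) (i j : nat) : Prop :=
  (((1 <= i)%nat /\ (i <= N)%nat) /\ orient_pres (f i) /\ (j <= N)%nat) \/
  (((1 <= i)%nat /\ (i <= N)%nat) /\ orient_rev (f i) /\ (N < j)%nat) \/
  ((N < i)%nat /\ ((1 <= i - N)%nat /\ (i - N <= N)%nat) /\ orient_pres (f (i - N)%nat) /\ (N < j)%nat) \/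
  ((N < i)%nat /\ ((1 <= i - N)%nat /\ (i - N <= N)%nat) /\ orient_rev (f (i - N)%nat) /\ (j <= N)%nat).

Definition SigmaA (N : nat) (f : nat -> R -> R) (w : seqZ) : Prop :=
  forall n, ((1 <= w n)%nat /\ (w n <= 2 * N)%nat) /\ amat N f (w n) (w (n + 1)%Z).

Definition bar (N i : nat) : nat := if (i <=? N)%nat then i else (i - N)%nat.
Definition proj (N : nat) (w : seqZ) : seqZ := fun n => bar N (w n).

Definition gmap (N : nat) (f : nat -> R -> R) (i : nat) : R -> R :=
  if (i <=? N)%nat then
    (if excluded_middle_informative (orient_pres (f i)) then f i
     else fun x => refl (f i x))
  else
    (if excluded_middle_informative (orient_pres (f (i - N)%nat))
     then fun x => refl (f (i - N)%nat (refl x))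
     else fun x => f (i - N)%nat (refl x)).

Definition pt := (seqZ * R)%type.

Definition Fmap (f : nat -> R -> R) (z : pt) : pt :=
  (shift (fst z), f (fst z 0%Z) (snd z)).

Definition Gmap (N : nat) (f : nat -> R -> R) (z : pt) : pt :=
  (shift (fst z), gmap N f (fst z 0%Z) (snd z)).

Definition Pimap (N : nat) (z : pt) : pt :=
  if (fst z 0%Z <=? N)%nat then (proj N (fst z), snd z)
  else (proj N (fst z), refl (snd z)).

Definition pset := pt -> Prop.
Definition seteq (A B : pset) : Prop := forall z, A z <-> B z.
Definition img (H : pt -> pt) (A : pset) : pset := fun z => exists w, A w /\ H w = z.

Definition space (Sig : seqZ -> Prop) : pset := fun z => Sig (fst z) /\ inI (snd z).

Definition strip_fun (Sig : seqZ -> Prop) (phi psi : seqZ -> R) : Prop :=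
  forall w, Sig w -> 0 <= phi w /\ phi w < psi w /\ psi w <= 1.

Definition strip (Sig : seqZ -> Prop) (phi psi : seqZ -> R) : pset :=
  fun z => Sig (fst z) /\ phi (fst z) <= snd z <= psi (fst z).

(* interior in Sig x I (product topology; cylinders x intervals form a basis) *)
Definition interior_in (Sig : seqZ -> Prop) (S : pset) : pset :=
  fun z => S z /\ exists (k : nat) (eps : R), 0 < eps /\
    forall w' x', Sig w' -> inI x' ->
      (forall n, (- Z.of_nat k <= n <= Z.of_nat k)%Z -> w' n = fst z n) ->
      Rabs (x' - snd z) < eps -> S (w', x').

Definition attracting (Sig : seqZ -> Prop) (H : pt -> pt) (S : pset) : Prop :=
  forall z, img H S z -> interior_in Sig S z.

Definition repelling (Sig : seqZ -> Prop) (H : pt -> pt) (S : pset) : Prop :=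
  (forall s, S s -> exists z, space Sig z /\ H z = s) /\
  (forall z, space Sig z -> S (H z) -> interior_in Sig S z).

Definition max_attractor (H : pt -> pt) (S : pset) : pset :=
  fun z => forall n : nat, exists w, S w /\ Nat.iter n H w = z.

Definition max_repeller (H : pt -> pt) (S : pset) : pset :=
  fun z => forall n : nat, S (Nat.iter n H z).

Definition standing (N : nat) (f : nat -> R -> R) : Prop :=
  forall i, ((1 <= i)%nat /\ (i <= N)%nat) ->
    (forall x, inI x -> inI (f i x)) /\ C1_diffeo_onto_image (f i).

Definition is_bistrip (N : nat) (T : pset) : Prop :=
  exists phi1 psi1 phi2 psi2,
    strip_fun (SigmaN N) phi1 psi1 /\ strip_fun (SigmaN N) phi2 psi2 /\
    seteq T (fun z => strip (SigmaN N) phi1 psi1 z \/ strip (SigmaN N) phi2 psi2 z).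

(* The projection [Pimap] is a two-sheeted cover of Sigma_N x I: the two points over
   (xi, x) are some b and its twin, obtained by moving every symbol of b to the other copy
   of {1..N} and reflecting the fibre coordinate.  [Pimap] semiconjugates G to F, the twin involution commutes with G, and
   the lifts of cylinder-interval neighbourhoods are again such neighbourhoods; so [Pimap]
   carries interiors to interiors, strips to bi-strips, and attracting (repelling) sets to
   attracting (repelling) sets.  For a point of the maximal attractor (repeller) of Pi(S),
   each level G^n(S) (resp. G^-n(S)) contains b or its twin; these levels decrease, so one
   of the two lies in all of them.  Lifting symbolic sequences needs every f_i to be
   monotone, which follows from continuity and injectivity by the intermediate value
   theorem. *)

From Pilot Require Import Defs.
From Stdlib Require Import Reals ZArith.
From Stdlib Require Import Lra Lia ClassicalEpsilon FunctionalExtensionality Bool Classical.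
Open Scope R_scope.

Lemma C1_on_cont_within (D : R -> Prop) (g : R -> R) : C1_on D g -> cont_within D g.
Proof.
  intros [d [Hd _]] x Hx eps Heps.
  destruct (Hd x Hx 1 Rlt_0_1) as [delta1 [Hdelta1 Hquot]].
  set (M := Rabs (d x) + 1).
  assert (HM : 0 < M) by (unfold M; pose proof (Rabs_pos (d x)); lra).
  exists (Rmin delta1 (eps / M)); split.
  { apply Rmin_glb_lt; [lra | apply Rdiv_lt_0_compat; lra]. }
  intros y Hy Hyx.
  destruct (Req_dec y x) as [->|Hne].
  { unfold Rminus; rewrite Rplus_opp_r, Rabs_R0; lra. }
  pose proof (Rmin_l delta1 (eps / M)); pose proof (Rmin_r delta1 (eps / M)).
  specialize (Hquot y Hy Hne ltac:(lra)).
  set (q := (g y - g x) / (y - x)) in *.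
  assert (Hq : Rabs q < M).
  { pose proof (Rabs_triang (q - d x) (d x)).
    replace (q - d x + d x) with q in * by ring. unfold M; lra. }
  assert (Hpos : 0 < Rabs (y - x)) by (apply Rabs_pos_lt; lra).
  replace (g y - g x) with (q * (y - x)) by (unfold q; field; lra).
  rewrite Rabs_mult.
  apply Rle_lt_trans with (M * Rabs (y - x)); [apply Rmult_le_compat_r; lra|].
  replace eps with (M * (eps / M)) by (field; lra).
  apply Rmult_lt_compat_l; lra.
Qed.

Definition clamp (t : R) : R := Rmax 0 (Rmin 1 t).

Lemma clamp_inI t : inI (clamp t).
Proof. unfold inI, clamp, Rmax, Rmin; repeat destruct Rle_dec; lra. Qed.

Lemma clamp_id t : inI t -> clamp t = t.
Proof. unfold inI, clamp, Rmax, Rmin; repeat destruct Rle_dec; lra. Qed.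

Lemma clamp_lipschitz t s : Rabs (clamp t - clamp s) <= Rabs (t - s).
Proof.
  unfold clamp, Rmax, Rmin; repeat destruct Rle_dec; unfold Rabs; repeat destruct Rcase_abs; lra.
Qed.

Lemma continuity_clamp_extension (g : R -> R) :
  cont_within inI g -> continuity (fun t => g (clamp t)).
Proof.
  intros Hg t0. unfold continuity_pt, continue_in, limit1_in, limit_in; simpl; unfold R_dist.
  intros eps Heps.
  destruct (Hg (clamp t0) (clamp_inI t0) eps Heps) as [delta [Hdelta Hclose]].
  exists delta; split; [exact Hdelta|].
  intros t [_ Ht]. apply Hclose; [apply clamp_inI|].
  eapply Rle_lt_trans; [apply clamp_lipschitz | exact Ht].
Qed.

Lemma continuity_no_root_sign (h : R -> R) :
  continuity h -> (forall t, 0 <= t <= 1 -> h t <> 0) -> (h 0 < 0 <-> h 1 < 0).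
Proof.
  intros Hh Hroot.
  assert (H01 : h 0 <> 0) by (apply Hroot; lra).
  assert (H11 : h 1 <> 0) by (apply Hroot; lra).
  split; intros Hneg; apply Rnot_le_lt; intros Hnonneg.
  - destruct (IVT h 0 1 Hh Rlt_0_1 Hneg ltac:(lra)) as [t [Ht Hzero]].
    exact (Hroot t Ht Hzero).
  - destruct (IVT (- h)%F 0 1 (continuity_opp h Hh) Rlt_0_1) as [t [Ht Hzero]];
      unfold opp_fct in *; try lra.
    apply (Hroot t Ht); lra.
Qed.

Lemma cont_inj_lt_iff_endpoints (g : R -> R) x y :
  cont_within inI g -> (forall x y, inI x -> inI y -> g x = g y -> x = y) ->
  inI x -> inI y -> x < y -> (g 0 < g 1 <-> g x < g y).
Proof.
  intros Hg Hinj Hx Hy Hxy. unfold inI in *.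
  (* Slide the pair (0, 1) to (x, y) along segments; the two points never meet. *)
  set (G := fun t => g (clamp t)).
  set (h := fun t => G (t * x) - G (1 + t * (y - 1))).
  assert (Hcont : continuity h).
  { apply continuity_minus;
      [change (fun t => G (t * x)) with (comp G (fun t => t * x))
      |change (fun t => G (1 + t * (y - 1))) with (comp G (fun t => 1 + t * (y - 1)))];
      apply continuity_comp; try reg; apply continuity_clamp_extension, Hg. }
  assert (Hnoroot : forall t, 0 <= t <= 1 -> h t <> 0).
  { intros t Ht Hzero. unfold h, G in Hzero.
    rewrite !clamp_id in Hzero by (unfold inI; split; nra).
    assert (E : t * x = 1 + t * (y - 1)) by (apply Hinj; unfold inI; try split; nra).
    nra. }
  pose proof (continuity_no_root_sign h Hcont Hnoroot) as Hsign.
  unfold h, G in Hsign. rewrite !clamp_id in Hsign by (unfold inI; lra).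
  replace (0 * x) with 0 in Hsign by ring. replace (1 + 0 * (y - 1)) with 1 in Hsign by ring.
  replace (1 * x) with x in Hsign by ring. replace (1 + 1 * (y - 1)) with y in Hsign by ring.
  lra.
Qed.

Lemma cont_inj_orient (g : R -> R) :
  cont_within inI g -> (forall x y, inI x -> inI y -> g x = g y -> x = y) ->
  orient_pres g \/ orient_rev g.
Proof.
  intros Hg Hinj.
  assert (I0 : inI 0) by (unfold inI; lra). assert (I1 : inI 1) by (unfold inI; lra).
  destruct (Rtotal_order (g 0) (g 1)) as [Hlt|[Heq|Hgt]].
  - left. intros x y Hx Hy Hxy. apply (cont_inj_lt_iff_endpoints g x y); auto.
  - apply Hinj in Heq; auto; lra.
  - right. intros x y Hx Hy Hxy.
    destruct (Rtotal_order (g x) (g y)) as [H|[H|H]]; auto.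
    + apply (cont_inj_lt_iff_endpoints g x y) in H; auto. lra.
    + apply Hinj in H; auto; lra.
Qed.

Fixpoint xor_upto (c : Z -> bool) (m : nat) : bool :=
  match m with O => false | S m => xorb (xor_upto c m) (c (Z.of_nat m)) end.
Fixpoint xor_below (c : Z -> bool) (m : nat) : bool :=
  match m with O => false | S m => xorb (xor_below c m) (c (- Z.of_nat (S m))%Z) end.

(* The solution of [s (n + 1) = xorb (s n) (c n)] with [s 0 = u]. *)
Definition layers (c : Z -> bool) (u : bool) (n : Z) : bool :=
  xorb u (if (0 <=? n)%Z then xor_upto c (Z.to_nat n) else xor_below c (Z.to_nat (- n))).

Lemma layers_0 c u : layers c u 0%Z = u.
Proof. apply xorb_false_r. Qed.

Lemma layers_succ c u n : layers c u (n + 1) = xorb (layers c u n) (c n).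
Proof.
  unfold layers. rewrite xorb_assoc_reverse. f_equal.
  destruct (Z.leb_spec 0 n).
  - rewrite (proj2 (Z.leb_le 0 (n + 1))) by lia.
    replace (Z.to_nat (n + 1)) with (S (Z.to_nat n)) by lia. simpl.
    rewrite Z2Nat.id by lia. reflexivity.
  - destruct (Z.eq_dec n (-1)) as [->|Hn]; [simpl; destruct (c (-1)%Z); reflexivity|].
    rewrite (proj2 (Z.leb_gt 0 (n + 1))) by lia.
    replace (Z.to_nat (- n)) with (S (Z.to_nat (- (n + 1)))) by lia. simpl.
    replace (Z.neg (Pos.of_succ_nat (Z.to_nat (- (n + 1))))) with n by lia.
    rewrite xorb_assoc_reverse, xorb_nilpotent, xorb_false_r. reflexivity.
Qed.

Lemma decreasing_family_pigeonhole {T : Type} (P : nat -> T -> Prop) (a b : T) :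
  (forall n x, P (S n) x -> P n x) -> (forall n, P n a \/ P n b) ->
  (forall n, P n a) \/ (forall n, P n b).
Proof.
  intros Hdec Hab.
  assert (Hmono : forall m n x, (n <= m)%nat -> P m x -> P n x)
    by (intros m n x Hnm; induction Hnm; auto).
  destruct (classic (forall n, P n a)) as [Ha|Ha]; [left; exact Ha | right].
  apply not_all_ex_not in Ha as [n0 Hn0]. intros n.
  destruct (Hab (Nat.max n n0)) as [H|H].
  - exfalso. exact (Hn0 (Hmono _ _ _ (Nat.le_max_r n n0) H)).
  - exact (Hmono _ _ _ (Nat.le_max_l n n0) H).
Qed.

Ltac case_leb :=
  repeat match goal with |- context [(?a <=? ?b)%nat] => destruct (Nat.leb_spec a b) end.

Definition reflect_if (b : bool) (x : R) : R := if b then refl x else x.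

Lemma refl_involutive x : refl (refl x) = x.
Proof. unfold refl; ring. Qed.

Lemma reflect_if_involutive b x : reflect_if b (reflect_if b x) = x.
Proof. destruct b; [apply refl_involutive | reflexivity]. Qed.

Lemma refl_inI x : inI x -> inI (refl x).
Proof. unfold inI, refl; lra. Qed.

Lemma reflect_if_inI b x : inI x -> inI (reflect_if b x).
Proof. destruct b; [apply refl_inI | auto]. Qed.

Definition sheet (N i : nat) : bool := negb (i <=? N)%nat.
Definition index_of (N j : nat) (s : bool) : nat := (j + if s then N else 0)%nat.

Lemma bar_index_of N j s : (1 <= j <= N)%nat -> bar N (index_of N j s) = j.
Proof. intros. unfold bar, index_of. destruct s; case_leb; lia. Qed.

Lemma sheet_index_of N j s : (1 <= j <= N)%nat -> sheet N (index_of N j s) = s.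
Proof. intros. unfold sheet, index_of. destruct s; case_leb; simpl; lia. Qed.

Lemma index_of_range N j s : (1 <= j <= N)%nat -> (1 <= index_of N j s <= 2 * N)%nat.
Proof. intros. unfold index_of. destruct s; lia. Qed.

Lemma bar_range N i : (1 <= i <= 2 * N)%nat -> (1 <= bar N i <= N)%nat.
Proof. intros. unfold bar. case_leb; lia. Qed.

Lemma index_of_bar_sheet N i : (1 <= i <= 2 * N)%nat -> index_of N (bar N i) (sheet N i) = i.
Proof. intros. unfold index_of, bar, sheet. case_leb; simpl; lia. Qed.

Definition twin_index (N i : nat) : nat := index_of N (bar N i) (negb (sheet N i)).

Definition twin (N : nat) (b : pt) : pt := (fun n => twin_index N (fst b n), refl (snd b)).

Lemma bar_twin_index N i : (1 <= i <= 2 * N)%nat -> bar N (twin_index N i) = bar N i.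
Proof. intros. apply bar_index_of, bar_range; lia. Qed.

Lemma sheet_twin_index N i : (1 <= i <= 2 * N)%nat -> sheet N (twin_index N i) = negb (sheet N i).
Proof. intros. apply sheet_index_of, bar_range; lia. Qed.

Definition reversing (f : nat -> R -> R) (i : nat) : bool :=
  if excluded_middle_informative (orient_pres (f i)) then false else true.

Definition lift (N : nat) (f : nat -> R -> R) (xi : seqZ) (u : bool) : seqZ :=
  fun n => index_of N (xi n) (layers (fun k => reversing f (xi k)) u n).

Lemma rev_not_pres g : orient_rev g -> ~ orient_pres g.
Proof.
  intros Hrev Hpres.
  assert (I0 : inI 0) by (unfold inI; lra). assert (I1 : inI 1) by (unfold inI; lra).
  specialize (Hrev 0 1 I0 I1 Rlt_0_1). specialize (Hpres 0 1 I0 I1 Rlt_0_1). lra.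
Qed.

Lemma reversing_pres f i : orient_pres (f i) -> reversing f i = false.
Proof. unfold reversing; destruct excluded_middle_informative; tauto. Qed.

Lemma reversing_rev f i : orient_rev (f i) -> reversing f i = true.
Proof.
  unfold reversing; destruct excluded_middle_informative; auto.
  intros Hrev; exfalso; eapply rev_not_pres; eauto.
Qed.

Lemma gmap_eq N f i x :
  gmap N f i x = reflect_if (xorb (sheet N i) (reversing f (bar N i)))
                            (f (bar N i) (reflect_if (sheet N i) x)).
Proof.
  unfold gmap, sheet, bar, reversing, reflect_if.
  destruct (i <=? N)%nat; destruct excluded_middle_informative; reflexivity.
Qed.

Lemma Pimap_eq N (b : pt) : Pimap N b = (proj N (fst b), reflect_if (sheet N (fst b 0%Z)) (snd b)).
Proof. unfold Pimap, sheet, reflect_if. destruct (fst b 0%Z <=? N)%nat; reflexivity. Qed.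

Section SkewProducts.

Variable N : nat.
Variable f : nat -> R -> R.
Hypothesis hf : standing N f.

Lemma amat_sheet i j : amat N f i j -> sheet N j = xorb (sheet N i) (reversing f (bar N i)).
Proof.
  unfold amat, sheet, bar.
  intros [[Hi [H Hj]]|[[Hi [H Hj]]|[[Hi [Hi' [H Hj]]]|[Hi [Hi' [H Hj]]]]]];
    case_leb; try lia;
    first [rewrite (reversing_pres _ _ H) | rewrite (reversing_rev _ _ H)]; reflexivity.
Qed.

Lemma standing_orient i : (1 <= i <= N)%nat -> orient_pres (f i) \/ orient_rev (f i).
Proof.
  intros Hi. destruct (hf i Hi) as [_ [HC1 [Hinj _]]].
  apply cont_inj_orient; [apply C1_on_cont_within |]; assumption.
Qed.

Lemma amat_of_sheet i j : (1 <= i <= 2 * N)%nat -> (1 <= j <= 2 * N)%nat ->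
  sheet N j = xorb (sheet N i) (reversing f (bar N i)) -> amat N f i j.
Proof.
  intros Hi Hj Hs. unfold amat.
  destruct (standing_orient (bar N i) (bar_range N i Hi)) as [H|H];
    [rewrite (reversing_pres _ _ H) in Hs | rewrite (reversing_rev _ _ H) in Hs];
    unfold sheet, bar in *; destruct (Nat.leb_spec i N); destruct (Nat.leb_spec j N);
    simpl in Hs; try discriminate; intuition lia.
Qed.

Lemma sheet_step w n : SigmaA N f w ->
  sheet N (w (n + 1)%Z) = xorb (sheet N (w n)) (reversing f (proj N w n)).
Proof. intros Hw. exact (amat_sheet _ _ (proj2 (Hw n))). Qed.

Lemma SigmaA_proj w : SigmaA N f w -> SigmaN N (proj N w).
Proof. intros Hw n. apply bar_range, Hw. Qed.

Lemma Gmap_SigmaA (b : pt) : SigmaA N f (fst b) -> SigmaA N f (fst (Gmap N f b)).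
Proof. intros Hb n. exact (Hb (n + 1)%Z). Qed.

Lemma iter_Gmap_SigmaA n (b : pt) :
  SigmaA N f (fst b) -> SigmaA N f (fst (Nat.iter n (Gmap N f) b)).
Proof. intros Hb. induction n as [|n IH]; [exact Hb | apply Gmap_SigmaA, IH]. Qed.

Lemma Gmap_space (b : pt) : space (SigmaA N f) b -> space (SigmaA N f) (Gmap N f b).
Proof.
  intros [Hw Hx]. split; [apply Gmap_SigmaA, Hw|]. simpl. rewrite gmap_eq.
  apply reflect_if_inI, (hf _ (bar_range _ _ (proj1 (Hw 0%Z)))), reflect_if_inI, Hx.
Qed.

Lemma iter_Gmap_space n (b : pt) :
  space (SigmaA N f) b -> space (SigmaA N f) (Nat.iter n (Gmap N f) b).
Proof. intros Hb. induction n as [|n IH]; [exact Hb | apply Gmap_space, IH]. Qed.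

Lemma Pimap_space (b : pt) : space (SigmaA N f) b -> space (SigmaN N) (Pimap N b).
Proof.
  intros [Hw Hx]. rewrite Pimap_eq. split; [apply SigmaA_proj, Hw | apply reflect_if_inI, Hx].
Qed.

Lemma Pimap_Gmap (b : pt) : SigmaA N f (fst b) -> Pimap N (Gmap N f b) = Fmap f (Pimap N b).
Proof.
  intros Hb. rewrite !Pimap_eq. unfold Gmap, Fmap; simpl. f_equal.
  unfold Defs.shift. rewrite (sheet_step _ 0 Hb), gmap_eq, reflect_if_involutive. reflexivity.
Qed.

Lemma Pimap_iter n (b : pt) : SigmaA N f (fst b) ->
  Pimap N (Nat.iter n (Gmap N f) b) = Nat.iter n (Fmap f) (Pimap N b).
Proof.
  intros Hb. induction n as [|n IH]; simpl; [reflexivity|].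
  rewrite Pimap_Gmap, IH by (apply iter_Gmap_SigmaA, Hb). reflexivity.
Qed.

Lemma twin_index_range i : (1 <= i <= 2 * N)%nat -> (1 <= twin_index N i <= 2 * N)%nat.
Proof. intros Hi. apply index_of_range, bar_range, Hi. Qed.

Lemma twin_SigmaA (b : pt) : SigmaA N f (fst b) -> SigmaA N f (fst (twin N b)).
Proof.
  intros Hb n. destruct (Hb n) as [Hn Ha]. destruct (Hb (n + 1)%Z) as [Hn1 _]. simpl.
  split; [apply twin_index_range, Hn|].
  apply amat_of_sheet; try apply twin_index_range; auto.
  rewrite !sheet_twin_index, bar_twin_index, (amat_sheet _ _ Ha) by auto.
  destruct (sheet N (fst b n)), (reversing f (bar N (fst b n))); reflexivity.
Qed.

Lemma twin_space (b : pt) : space (SigmaA N f) b -> space (SigmaA N f) (twin N b).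
Proof. intros [Hw Hx]. split; [apply twin_SigmaA, Hw | apply refl_inI, Hx]. Qed.

Lemma Pimap_twin (b : pt) : SigmaA N f (fst b) -> Pimap N (twin N b) = Pimap N b.
Proof.
  intros Hb. rewrite !Pimap_eq; simpl. f_equal.
  - apply functional_extensionality; intros n. apply bar_twin_index, Hb.
  - rewrite sheet_twin_index by apply Hb.
    destruct (sheet N (fst b 0%Z)); simpl; [reflexivity | apply refl_involutive].
Qed.

Lemma Gmap_twin (b : pt) :
  (1 <= fst b 0%Z <= 2 * N)%nat -> Gmap N f (twin N b) = twin N (Gmap N f b).
Proof.
  intros H. unfold Gmap, twin; simpl. f_equal.
  rewrite !gmap_eq, bar_twin_index, sheet_twin_index by exact H.
  destruct (sheet N (fst b 0%Z)), (reversing f (bar N (fst b 0%Z))); simpl;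
    rewrite ?refl_involutive; reflexivity.
Qed.

Lemma iter_Gmap_twin n (b : pt) : SigmaA N f (fst b) ->
  Nat.iter n (Gmap N f) (twin N b) = twin N (Nat.iter n (Gmap N f) b).
Proof.
  intros Hb. induction n as [|n IH]; simpl; [reflexivity|].
  rewrite IH. apply Gmap_twin, (iter_Gmap_SigmaA n b Hb).
Qed.

(* The sheet flips exactly after the symbols of orientation reversing maps. *)
Lemma SigmaA_agree w w' k : SigmaA N f w -> SigmaA N f w' ->
  (forall n, (- Z.of_nat k <= n <= Z.of_nat k)%Z -> proj N w n = proj N w' n) ->
  sheet N (w 0%Z) = sheet N (w' 0%Z) ->
  forall n, (- Z.of_nat k <= n <= Z.of_nat k)%Z -> w n = w' n.
Proof.
  intros Hw Hw' Hproj H0.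
  assert (Hsheet : forall m, (m <= k)%nat ->
            sheet N (w (Z.of_nat m)) = sheet N (w' (Z.of_nat m)) /\
            sheet N (w (- Z.of_nat m)%Z) = sheet N (w' (- Z.of_nat m)%Z)).
  { induction m as [|m IH]; intros Hm; [split; exact H0|].
    destruct IH as [IHpos IHneg]; [lia|]. split.
    - rewrite Nat2Z.inj_succ, <- Z.add_1_r, (sheet_step w _ Hw), (sheet_step w' _ Hw'), IHpos, Hproj
        by lia.
      reflexivity.
    - pose proof (sheet_step w (- Z.of_nat (S m)) Hw) as Ew.
      pose proof (sheet_step w' (- Z.of_nat (S m)) Hw') as Ew'.
      replace (- Z.of_nat (S m) + 1)%Z with (- Z.of_nat m)%Z in Ew, Ew' by lia.
      rewrite Hproj, IHneg, Ew' in Ew by lia. revert Ew.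
      destruct (sheet N (w (- Z.of_nat (S m))%Z)), (sheet N (w' (- Z.of_nat (S m))%Z)),
        (reversing f (proj N w' (- Z.of_nat (S m))%Z)); simpl; congruence. }
  intros n Hn.
  rewrite <- (index_of_bar_sheet N (w n)), <- (index_of_bar_sheet N (w' n))
    by (apply Hw || apply Hw').
  f_equal; [apply Hproj, Hn|].
  destruct (Z.le_gt_cases 0 n).
  - replace n with (Z.of_nat (Z.to_nat n)) by lia. apply Hsheet; lia.
  - replace n with (- Z.of_nat (Z.to_nat (- n)))%Z by lia. apply Hsheet; lia.
Qed.

Lemma SigmaA_unique w w' : SigmaA N f w -> SigmaA N f w' -> proj N w = proj N w' ->
  sheet N (w 0%Z) = sheet N (w' 0%Z) -> w = w'.
Proof.
  intros Hw Hw' Hproj H0. apply functional_extensionality; intros n.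
  apply (SigmaA_agree w w' (Z.abs_nat n)); auto; [intros; rewrite Hproj; reflexivity | lia].
Qed.

Lemma Pimap_sheet_inj (b b' : pt) : SigmaA N f (fst b) -> SigmaA N f (fst b') ->
  Pimap N b = Pimap N b' -> sheet N (fst b 0%Z) = sheet N (fst b' 0%Z) -> b = b'.
Proof.
  destruct b as [w x], b' as [w' x']; simpl. intros Hw Hw' E Hs.
  rewrite !Pimap_eq in E; simpl in E. injection E as Eproj Ex. rewrite Hs in Ex.
  f_equal; [apply SigmaA_unique; auto|].
  rewrite <- (reflect_if_involutive (sheet N (w' 0%Z)) x), Ex. apply reflect_if_involutive.
Qed.

Lemma Pimap_fibre (b b' : pt) : SigmaA N f (fst b) -> SigmaA N f (fst b') ->
  Pimap N b' = Pimap N b -> b' = b \/ b' = twin N b.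
Proof.
  intros Hb Hb' E.
  destruct (bool_dec (sheet N (fst b' 0%Z)) (sheet N (fst b 0%Z))) as [Hs|Hs];
    [left | right]; apply Pimap_sheet_inj; auto using twin_SigmaA.
  - rewrite Pimap_twin; auto.
  - simpl. rewrite sheet_twin_index by apply Hb.
    destruct (sheet N (fst b 0%Z)), (sheet N (fst b' 0%Z)); simpl; congruence.
Qed.

Lemma proj_lift xi u : SigmaN N xi -> proj N (lift N f xi u) = xi.
Proof. intros Hxi. apply functional_extensionality; intros n. apply bar_index_of, Hxi. Qed.

Lemma sheet_lift0 xi u : SigmaN N xi -> sheet N (lift N f xi u 0%Z) = u.
Proof. intros Hxi. unfold lift. rewrite sheet_index_of by apply Hxi. apply layers_0. Qed.

Lemma lift_SigmaA xi u : SigmaN N xi -> SigmaA N f (lift N f xi u).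
Proof.
  intros Hxi n. split; [apply index_of_range, Hxi|].
  apply amat_of_sheet; try apply index_of_range, Hxi.
  unfold lift. rewrite !sheet_index_of, bar_index_of, layers_succ by apply Hxi. reflexivity.
Qed.

Lemma lift_proj_sheet w : SigmaA N f w -> lift N f (proj N w) (sheet N (w 0%Z)) = w.
Proof.
  intros Hw. apply SigmaA_unique; auto using lift_SigmaA, SigmaA_proj.
  - apply proj_lift, SigmaA_proj, Hw.
  - apply sheet_lift0, SigmaA_proj, Hw.
Qed.

Lemma Pimap_lift xi u y : SigmaN N xi -> Pimap N (lift N f xi u, reflect_if u y) = (xi, y).
Proof.
  intros Hxi. rewrite Pimap_eq; simpl.
  rewrite proj_lift, sheet_lift0, reflect_if_involutive by exact Hxi. reflexivity.
Qed.

Lemma Pimap_surj z : space (SigmaN N) z -> exists b, space (SigmaA N f) b /\ Pimap N b = z.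
Proof.
  intros [Hxi Hy]. exists (lift N f (fst z) false, reflect_if false (snd z)). split.
  - split; [apply lift_SigmaA, Hxi | exact Hy].
  - rewrite Pimap_lift by exact Hxi. destruct z; reflexivity.
Qed.

Lemma interior_Pimap (A : pset) (b : pt) : SigmaA N f (fst b) ->
  interior_in (SigmaA N f) A b -> interior_in (SigmaN N) (img (Pimap N) A) (Pimap N b).
Proof.
  intros Hb [Ab [k [eps [Heps Hnbhd]]]]. split; [exists b; auto|].
  exists k, eps; split; [exact Heps|].
  intros xi y Hxi Hy Hagree Hclose.
  set (u := sheet N (fst b 0%Z)).
  exists (lift N f xi u, reflect_if u y). split; [|apply Pimap_lift, Hxi].
  rewrite Pimap_eq in Hagree, Hclose; simpl in Hagree, Hclose. fold u in Hclose.
  apply Hnbhd; simpl.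
  - apply lift_SigmaA, Hxi.
  - apply reflect_if_inI, Hy.
  - apply (SigmaA_agree _ _ k); auto using lift_SigmaA.
    + intros n Hn. rewrite proj_lift by exact Hxi. auto.
    + rewrite sheet_lift0; auto.
  - destruct u; simpl; [|exact Hclose]. unfold refl in *.
    replace (1 - y - snd b) with (- (y - (1 - snd b))) by ring. rewrite Rabs_Ropp. exact Hclose.
Qed.

Lemma Pimap_strip_bistrip phi psi : strip_fun (SigmaA N f) phi psi ->
  is_bistrip N (img (Pimap N) (strip (SigmaA N f) phi psi)).
Proof.
  intros hS.
  exists (fun xi => phi (lift N f xi false)), (fun xi => psi (lift N f xi false)),
         (fun xi => refl (psi (lift N f xi true))), (fun xi => refl (phi (lift N f xi true))).
  split; [|split].
  - intros xi Hxi. apply hS, lift_SigmaA, Hxi.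
  - intros xi Hxi. destruct (hS (lift N f xi true)) as [H0 [H1 H2]]; [apply lift_SigmaA, Hxi|].
    unfold refl; lra.
  - intros z. split.
    + intros [[w x] [[Hw Hx] <-]]. simpl in Hw, Hx.
      rewrite <- (lift_proj_sheet w Hw) in Hx. rewrite Pimap_eq; unfold strip; simpl.
      destruct (sheet N (w 0%Z)); [right | left]; (split; [apply SigmaA_proj, Hw|]);
        simpl; unfold refl; lra.
    + intros [[Hxi Hy]|[Hxi Hy]];
        [exists (lift N f (fst z) false, reflect_if false (snd z))
        |exists (lift N f (fst z) true, reflect_if true (snd z))];
        (split; [split; [apply lift_SigmaA, Hxi|]
                | rewrite Pimap_lift by exact Hxi; destruct z; reflexivity]);
        simpl; unfold refl in *; lra.
Qed.

Section Transfer.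

Variable A : pset.
Hypothesis HA : forall b, A b -> space (SigmaA N f) b.

Lemma attracting_Pimap :
  attracting (SigmaA N f) (Gmap N f) A -> attracting (SigmaN N) (Fmap f) (img (Pimap N) A).
Proof.
  intros Hatt z [p [[b [Ab <-]] <-]].
  assert (Hb : SigmaA N f (fst b)) by apply HA, Ab.
  rewrite <- Pimap_Gmap by exact Hb.
  apply interior_Pimap; [apply Gmap_SigmaA, Hb | apply Hatt; exists b; auto].
Qed.

Lemma max_attractor_Pimap :
  attracting (SigmaA N f) (Gmap N f) A ->
  seteq (img (Pimap N) (max_attractor (Gmap N f) A)) (max_attractor (Fmap f) (img (Pimap N) A)).
Proof.
  intros Hatt z. split.
  - intros [b [Hb <-]] n. destruct (Hb n) as [w [Aw <-]].
    exists (Pimap N w). split; [exists w; auto | symmetry; apply Pimap_iter, HA, Aw].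
  - intros Hz. destruct (Hz 0%nat) as [p [[b0 [Ab0 <-]] <-]].
    assert (Hb0 : SigmaA N f (fst b0)) by apply HA, Ab0.
    set (P := fun n x => exists w, A w /\ Nat.iter n (Gmap N f) w = x).
    assert (Hdec : forall n x, P (S n) x -> P n x).
    { intros n x [w [Aw <-]]. exists (Gmap N f w).
      split; [apply Hatt; exists w; auto | symmetry; apply Nat.iter_succ_r]. }
    assert (Hcover : forall n, P n b0 \/ P n (twin N b0)).
    { intros n. destruct (Hz n) as [p [[w [Aw <-]] Ew]].
      rewrite <- Pimap_iter in Ew by apply HA, Aw.
      destruct (Pimap_fibre b0 (Nat.iter n (Gmap N f) w) Hb0
                  (iter_Gmap_SigmaA n w (proj1 (HA w Aw))) Ew) as [E|E];
        [left | right]; exists w; auto. }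
    destruct (decreasing_family_pigeonhole P b0 (twin N b0) Hdec Hcover) as [H|H];
      [exists b0 | exists (twin N b0)]; split; auto.
    apply Pimap_twin; auto.
Qed.

Lemma repelling_Pimap :
  repelling (SigmaA N f) (Gmap N f) A -> repelling (SigmaN N) (Fmap f) (img (Pimap N) A).
Proof.
  intros [Hpre Hrep]. split.
  - intros s [w [Aw <-]]. destruct (Hpre w Aw) as [b [Hb <-]].
    exists (Pimap N b). split; [apply Pimap_space, Hb | symmetry; apply Pimap_Gmap, Hb].
  - intros z Hz [w [Aw Ew]].
    destruct (Pimap_surj z Hz) as [b [Hb <-]].
    rewrite <- Pimap_Gmap in Ew by apply Hb.
    destruct (Pimap_fibre (Gmap N f b) w (Gmap_SigmaA b (proj1 Hb)) (proj1 (HA w Aw)) Ew)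
      as [E|E].
    + apply interior_Pimap; [apply Hb |].
      apply Hrep; [exact Hb | rewrite <- E; exact Aw].
    + rewrite <- (Pimap_twin b) by apply Hb.
      apply interior_Pimap; [apply twin_SigmaA, Hb |].
      apply Hrep; [apply twin_space, Hb | rewrite Gmap_twin, <- E; [exact Aw | apply Hb]].
Qed.

Lemma max_repeller_Pimap :
  repelling (SigmaA N f) (Gmap N f) A ->
  seteq (img (Pimap N) (max_repeller (Gmap N f) A)) (max_repeller (Fmap f) (img (Pimap N) A)).
Proof.
  intros [_ Hrep] z. split.
  - intros [b [Hb <-]] n. exists (Nat.iter n (Gmap N f) b).
    split; [exact (Hb n) | apply Pimap_iter, HA, (Hb 0%nat)].
  - intros Hz. destruct (Hz 0%nat) as [b0 [Ab0 E0]]. simpl in E0. subst z.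
    assert (Hb0 : space (SigmaA N f) b0) by apply HA, Ab0.
    set (P := fun n x => space (SigmaA N f) x /\ A (Nat.iter n (Gmap N f) x)).
    assert (Hdec : forall n x, P (S n) x -> P n x).
    { intros n x [Hx Ax]. split; [exact Hx|].
      apply (Hrep _ (iter_Gmap_space n x Hx) Ax). }
    assert (Hcover : forall n, P n b0 \/ P n (twin N b0)).
    { intros n. destruct (Hz n) as [w [Aw Ew]].
      rewrite <- Pimap_iter in Ew by apply Hb0.
      destruct (Pimap_fibre (Nat.iter n (Gmap N f) b0) w
                  (iter_Gmap_SigmaA n b0 (proj1 Hb0)) (proj1 (HA w Aw)) Ew) as [E|E];
        [left | right].
      - split; [exact Hb0 | rewrite <- E; exact Aw].
      - split; [apply twin_space, Hb0|].
        rewrite iter_Gmap_twin, <- E; [exact Aw | apply Hb0]. }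
    destruct (decreasing_family_pigeonhole P b0 (twin N b0) Hdec Hcover) as [H|H];
      [exists b0 | exists (twin N b0)]; split; try (intros n; apply H).
    + reflexivity.
    + apply Pimap_twin, Hb0.
Qed.

End Transfer.

End SkewProducts.

Lemma strip_space (Sig : seqZ -> Prop) phi psi (b : pt) :
  strip_fun Sig phi psi -> strip Sig phi psi b -> space Sig b.
Proof. intros Hphi [Hw Hx]. destruct (Hphi _ Hw). split; [exact Hw | unfold inI; lra]. Qed.

Theorem lemma3p10 (N : nat) (f : nat -> R -> R) (hf : standing N f)
  (phi psi : seqZ -> R) (hS : strip_fun (SigmaA N f) phi psi) :
  let S := strip (SigmaA N f) phi psi in
  (attracting (SigmaA N f) (Gmap N f) S ->
     is_bistrip N (img (Pimap N) S) /\
     attracting (SigmaN N) (Fmap f) (img (Pimap N) S) /\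
     seteq (img (Pimap N) (max_attractor (Gmap N f) S))
           (max_attractor (Fmap f) (img (Pimap N) S))) /\
  (repelling (SigmaA N f) (Gmap N f) S ->
     is_bistrip N (img (Pimap N) S) /\
     repelling (SigmaN N) (Fmap f) (img (Pimap N) S) /\
     seteq (img (Pimap N) (max_repeller (Gmap N f) S))
           (max_repeller (Fmap f) (img (Pimap N) S))).
Proof.
  intros S.
  assert (HS : forall b, S b -> space (SigmaA N f) b) by (intros b; apply strip_space, hS).
  pose proof (Pimap_strip_bistrip N f hf phi psi hS) as Hbistrip.
  split; intros H; (split; [exact Hbistrip | split]).
  - exact (attracting_Pimap N f hf S HS H).
  - exact (max_attractor_Pimap N f hf S HS H).
  - exact (repelling_Pimap N f hf S HS H).
  - exact (max_repeller_Pimap N f hf S HS H).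
Qed.
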